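(* Let $M\in\mathrm{M}_n(\mathbb{K})$ be a cyclic matrix with minimal polynomial $f=f_1^{m_1}\cdots f_s^{m_s}$, where $f_1,\dots,f_s\in\mathbb{K}[x]$ are pairwise distinct monic irreducible separable polynomials and $m_i\ge1$. For $P\in\mathbb{L}[x]$ let $\delta_{\mathbb{L}}(P)$ be the number of monic irreducible divisors of $P$ in $\mathbb{L}[x]$. Let $\mathbb{P}$ be the proportion, among all $M$-cyclic codes $\mathcal{C}\subseteq\mathbb{L}^n$ (including $\{0\}$ and $\mathbb{L}^n$), of those with minimal rank distance different from $1$ (i.e. $\mathcal{C}=\{0\}$ or $M_1(\mathcal{C})\ge2$). Then $$\mathbb{P}=\prod_{i=1}^s\Big(1-\Big(\frac{m_i}{m_i+1}\Big)^{\delta_{\mathbb{L}}(f_i)}\Big),\qquad \prod_{i=1}^s\frac{1}{m_i+1}\le\mathbb{P}\le\prod_{i=1}^s\Big(1-\Big(\frac{m_i}{m_i+1}\Big)^{\deg f_i}\Big).$$ Moreover: (1) $\mathbb{P}=\prod_i\frac1{m_i+1}$ if and only if $f_1,\dots,f_s$ are irreducible in $\mathbb{L}[x]$, if and only if every nonzero $M$-cyclic code has first rank weight $1$; (2) $\mathbb{P}=\prod_i\big(1-(\frac{m_i}{m_i+1})^{\deg f_i}\big)$ if and only if $f$ splits completely into linear factors in $\mathbb{L}[x]$.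
   Context: Let $\mathbb{L}/\mathbb{K}$ be a field extension of finite degree $m\ge n$. Vectors are row vectors. For $c=(c_1,\dots,c_n)\in\mathbb{L}^n$, $\mathrm{wt}_R(c)=\dim_{\mathbb{K}}\mathrm{Span}_{\mathbb{K}}(c_1,\dots,c_n)$, and for a nonzero linear code $\mathcal{C}\subseteq\mathbb{L}^n$ (an $\mathbb{L}$-subspace), $M_1(\mathcal{C})=\min\{\mathrm{wt}_R(c):0\neq c\in\mathcal{C}\}$. A matrix $M\in\mathrm{M}_n(\mathbb{K})$ is cyclic if there is $v\in\mathbb{K}^n$ with $(v,vM^t,\dots,v(M^t)^{n-1})$ a basis of $\mathbb{K}^n$. An $M$-cyclic code is an $\mathbb{L}$-subspace $\mathcal{C}\subseteq\mathbb{L}^n$ with $cM^t\in\mathcal{C}$ for all $c\in\mathcal{C}$, where $M$ is cyclic; these are in bijection with the monic divisors of $f$ in $\mathbb{L}[x]$. *)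

From HB Require Import structures.
From mathcomp Require Import all_boot all_order all_algebra all_field.
From mathcomp Require Import boolp.
Set Implicit Arguments. Unset Strict Implicit. Unset Printing Implicit Defensive.
Import GRing.Theory.
Local Open Scope ring_scope.

Definition wtR (K : fieldType) (L : fieldExtType K) (n : nat) (c : 'rV[L]_n) : nat :=
  \dim (<<[seq c ord0 i | i <- enum 'I_n]>>%VS : {vspace L}).

Definition has_weight (K : fieldType) (L : fieldExtType K) (n : nat)
  (C : {vspace 'rV[L]_n}) : pred nat :=
  fun k => `[< exists2 c, c \in C & (c != 0) && (wtR c == k) >].

(* M_1(C) = min { wt_R(c) : 0 <> c in C }  (set to 0 when C = {0}) *)
Definition M1 (K : fieldType) (L : fieldExtType K) (n : nat)
  (C : {vspace 'rV[L]_n}) : nat :=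
  match pselect (exists k, has_weight C k) with
  | left H => ex_minn H
  | right _ => 0%N
  end.

Definition cyclic_mx (K : fieldType) (n : nat) (M : 'M[K]_n) : Prop :=
  exists v : 'rV[K]_n, row_free (\matrix_(i < n) (v *m (M^T) ^+ i)).

Definition Mcyclic_code (K : fieldType) (L : fieldExtType K) (n : nat)
  (M : 'M[K]_n) (C : {vspace 'rV[L]_n}) : Prop :=
  forall c, c \in C -> c *m (map_mx (in_alg L) M)^T \in C.

Definition is_delta (L : fieldType) (p : {poly L}) (d : nat) : Prop :=
  exists s : seq {poly L}, [/\ uniq s,
    (forall q, q \in s <-> [/\ q \is monic, irreducible_poly q & q %| p])
    & size s = d].

From HB Require Import structures.
From mathcomp Require Import all_boot all_order all_algebra all_field.
From mathcomp Require Import boolp zify ring.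
Set Implicit Arguments. Unset Strict Implicit. Unset Printing Implicit Defensive.
Import Order.TTheory GRing.Theory Num.Theory.
Local Open Scope ring_scope.

(* Over L the minimal polynomial of M^t is the product of the f_i^m_i, and f_i
   factors into delta_i distinct monic irreducibles g.  Since M is cyclic, the
   M-cyclic codes are exactly the images c |-> c h(M^t) of the monic divisors h of
   this polynomial, one for each choice of exponents 0 <= e_g <= m_i: there are
   prod_i (m_i+1)^delta_i of them.  A code has rank weight one iff it contains a
   nonzero K-rational vector, i.e. (by cyclicity over K) iff h divides the image
   of some a in K[x] not divisible by f; this happens iff for some i no factor g of
   f_i occurs in h with the full exponent m_i.  The other codes are thus counted by
   prod_i ((m_i+1)^delta_i - m_i^delta_i), which gives the product formula; the
   bounds and their equality cases come from 1 <= delta_i <= deg f_i, where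
   delta_i = 1 iff f_i stays irreducible over L and delta_i = deg f_i iff f_i
   splits. *)

Section IrreducibleFactors.
Variable F : fieldType.
Implicit Types p q g h : {poly F}.

Lemma monic_eqp_exists p : p != 0 -> exists2 r, r \is monic & r %= p.
Proof.
move=> p_neq0; have lc_neq0 : (lead_coef p)^-1 != 0 by rewrite invr_eq0 lead_coef_eq0.
by exists ((lead_coef p)^-1 *: p); rewrite ?eqp_scale // monicE lead_coefZ mulVf ?lead_coef_eq0.
Qed.

Lemma irredp_dvdp_prod (I : eqType) (r : seq I) (Q : I -> {poly F}) g :
  irreducible_poly g -> g %| \prod_(i <- r) Q i -> exists2 i, i \in r & g %| Q i.
Proof.
move=> irr_g; elim: r => [|i r IHr].
  by rewrite big_nil dvdp1 => /eqP g1; move: irr_g.1; rewrite g1.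
rewrite big_cons; have [gQi _|nQi] := boolP (g %| Q i); first by exists i; rewrite ?mem_head.
rewrite Gauss_dvdpr ?irreducible_poly_coprime // => /IHr[j jr gQj].
by exists j; rewrite // in_cons jr orbT.
Qed.

Lemma irredp_monic_dvdp_eq g1 g2 : irreducible_poly g1 -> irreducible_poly g2 ->
  g1 \is monic -> g2 \is monic -> g1 %| g2 -> g1 = g2.
Proof.
move=> irr1 irr2 mon1 mon2 g12; apply/eqP; rewrite -eqp_monic //.
by apply: irr2 => //; rewrite neq_ltn irr1.1 orbT.
Qed.

Lemma irredp_monic_coprime g1 g2 : irreducible_poly g1 -> irreducible_poly g2 ->
  g1 \is monic -> g2 \is monic -> g1 != g2 -> coprimep g1 g2.
Proof.
move=> irr1 irr2 mon1 mon2; apply: contraNT.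
by rewrite irreducible_poly_coprime // negbK => /(irredp_monic_dvdp_eq irr1 irr2 mon1 mon2)->.
Qed.

Lemma dvdp_irredp_exp g e h : irreducible_poly g ->
  h %| g ^+ e -> exists2 k, (k <= e)%N & h %= g ^+ k.
Proof.
move=> irr_g; have g_neq0 := irredp_neq0 irr_g.
elim: e h => [|e IHe] h.
  by rewrite expr0 => h1; exists 0%N; rewrite // expr0 /eqp h1 dvd1p.
move=> hge; have [gh|ngh] := boolP (g %| h).
  have [|k le_ke hgk] := IHe (h %/ g).
    by rewrite -(dvdp_mul2r _ _ g_neq0) divpK // -exprSr.
  by exists k.+1; rewrite // -(divpK gh) exprSr eqp_mul2r.
have /(coprimep_dvdl hge) : coprimep h (g ^+ e.+1).
  by rewrite coprimep_sym coprimep_expl // irreducible_poly_coprime.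
by rewrite coprimepp size_poly_eq1 => h1; exists 0%N; rewrite ?expr0.
Qed.

Lemma monic_dvdp_irredp_exp g e h : irreducible_poly g -> g \is monic ->
  h \is monic -> h %| g ^+ e -> exists2 k, (k <= e)%N & h = g ^+ k.
Proof.
move=> irr_g mon_g mon_h /(dvdp_irredp_exp irr_g)[k le_ke hgk].
by exists k => //; apply/eqP; rewrite -eqp_monic ?monic_exp.
Qed.

Lemma dvdp_irredp_expS g e h : irreducible_poly g ->
  h %| g ^+ e.+1 -> ~~ (g ^+ e.+1 %| h) -> h %| g ^+ e.
Proof.
move=> irr_g /(dvdp_irredp_exp irr_g)[k]; rewrite leq_eqVlt ltnS.
case/orP => [/eqP-> /eqp_dvdr-> | le_ke /eqp_dvdl->]; first by rewrite dvdpp.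
by rewrite dvdp_exp2l.
Qed.

Lemma monic_irredp_factorization q : q \is monic -> exists r : seq {poly F},
  (forall g, g \in r -> g \is monic /\ irreducible_poly g) /\ q = \prod_(g <- r) g.
Proof.
have [k] := ubnP (size q); elim: k q => // k IHk q /ltnSE le_qk mon_q.
have q_neq0 := monic_neq0 mon_q.
have [le_q1|lt1q] := leqP (size q) 1.
  exists [::]; split => //; rewrite big_nil; apply/eqP; rewrite -eqp_monic ?monic1 //.
  by rewrite -size_poly_eq1 eqn_leq le_q1 size_poly_gt0.
have [irr_q|] := pselect (irreducible_poly q).
  by exists [:: q]; split; [move=> g; rewrite inE => /eqP-> | rewrite big_seq1].
move=> red_q; have /existsNP[d /not_implyP[d_not1 /not_implyP[dq not_dq]]] :
  ~ (forall d : {poly F}, size d != 1%N -> d %| q -> d %= q) by move=> irr; apply: red_q.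
have d_neq0 : d != 0 by apply: contraNneq q_neq0 => d0; move: dq; rewrite d0 dvd0p.
have [d1 mon_d1 d1d] := monic_eqp_exists d_neq0.
have d1q : d1 %| q by rewrite (eqp_dvdl _ d1d).
pose e := q %/ d1; have qE : q = e * d1 by rewrite divpK.
have mon_e : e \is monic by move: mon_q; rewrite qE monicMr.
have lt1d1 : (1 < size d1)%N.
  by rewrite ltn_neqAle eq_sym (eqp_size d1d) d_not1 size_poly_gt0.
have lt_d1q : (size d1 < size q)%N.
  rewrite ltn_neqAle dvdp_leq // andbT (dvdp_size_eqp d1q).
  by apply/negP => d1q'; apply: not_dq; rewrite -(eqp_ltrans d1d).
have lt_eq : (size e < size q)%N.
  have e_gt0 : (0 < size e)%N by rewrite size_poly_gt0 monic_neq0.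
  by rewrite qE size_mul ?monic_neq0 // -ltnS prednK ?addn_gt0 ?e_gt0 // -addn1 ltn_add2l.
rewrite qE; have [r1 [r1_irr ->]] := IHk _ (leq_trans lt_eq le_qk) mon_e.
have [r2 [r2_irr ->]] := IHk _ (leq_trans lt_d1q le_qk) mon_d1.
exists (r1 ++ r2); split; last by rewrite big_cat.
by move=> g; rewrite mem_cat => /orP[/r1_irr|/r2_irr].
Qed.

Lemma mem_irredp_factors (r : seq {poly F}) h :
  (forall g, g \in r -> g \is monic /\ irreducible_poly g) ->
  h \in r <-> [/\ h \is monic, irreducible_poly h & h %| \prod_(g <- r) g].
Proof.
move=> r_irr; split=> [hr | [mon_h irr_h /(irredp_dvdp_prod irr_h)[g gr hg]]].
  by have [mon_h irr_h] := r_irr h hr; rewrite (big_rem h hr) /= dvdp_mulr.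
by have [mon_g irr_g] := r_irr g gr; rewrite (irredp_monic_dvdp_eq irr_h irr_g mon_h mon_g hg).
Qed.

Lemma separable_prod_uniq (r : seq {poly F}) :
  (forall g, g \in r -> (1 < size g)%N) -> separable_poly (\prod_(g <- r) g) -> uniq r.
Proof.
elim: r => [|g r IHr] //= r_size; rewrite big_cons => sep_gr.
have lt1g := r_size g (mem_head g r).
apply/andP; split; last first.
  apply: IHr; first by move=> h hr; apply: r_size; rewrite in_cons hr orbT.
  by apply: dvdp_separable sep_gr; rewrite dvdp_mull.
apply/negP => gr; have: coprimep g g.
  apply: (separable_coprime sep_gr); rewrite dvdp_mul2l ?(big_rem g gr) ?dvdp_mulr //.
  by rewrite -size_poly_gt0 ltnW.
by rewrite coprimepp; case: (size g) lt1g => [|[]].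
Qed.

Lemma irredp_prod_irredp (r : seq {poly F}) : uniq r ->
  (forall g, g \in r -> g \is monic /\ irreducible_poly g) ->
  irreducible_poly (\prod_(g <- r) g) <-> size r = 1%N.
Proof.
move=> r_uniq r_irr; split; last first.
  case: r r_irr {r_uniq} => [|g [|g' r]] r_irr //= _.
  by rewrite big_seq1; case: (r_irr g (mem_head g [::])).
move=> irr_P; have mon_P : \prod_(g <- r) g \is monic.
  by rewrite big_seq; apply: monic_prod => g /r_irr[].
have rE g : g \in r -> g = \prod_(g <- r) g.
  move=> gr; have [mon_g irr_g] := r_irr g gr.
  by apply: irredp_monic_dvdp_eq => //; rewrite (big_rem g gr) dvdp_mulr.
case: r r_uniq r_irr irr_P rE {mon_P} => [|g [|g' r]] //.
  by rewrite big_nil => _ _ [] ; rewrite size_poly1.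
rewrite /= inE negb_or => /andP[/andP[/negP gg' _] _] _ _ rE.
by case: gg'; apply/eqP; rewrite [LHS]rE ?mem_head // [RHS]rE // !inE eqxx orbT.
Qed.

Lemma size_prod_irredp (r : seq {poly F}) :
  (forall g, g \in r -> irreducible_poly g) ->
  (size r <= (size (\prod_(g <- r) g)%R).-1 ?= iff all (fun g : {poly F} => size g == 2%N) r)%N.
Proof.
elim: r => [|g r IHr] r_irr; first by rewrite big_nil size_poly1.
have lt1g : (1 < size g)%N := (r_irr g (mem_head g r)).1.
have r_neq0 : \prod_(h <- r) h != 0.
  rewrite prodf_seq_neq0; apply/allP => h hr; apply: irredp_neq0.
  by apply: r_irr; rewrite inE hr orbT.
rewrite big_cons size_mul ?(irredp_neq0 (r_irr g _)) ?mem_head //.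
set P := \prod_(h <- r) h; have -> : ((size g + size P).-1.-1 = (size g).-1 + (size P).-1)%N.
  by move: lt1g r_neq0; rewrite -size_poly_gt0; move: (size g) (size P) => a b; lia.
rewrite /= -[(size r).+1]add1n; apply: leqif_add.
  by split; [rewrite ltn_predRL | rewrite -eqSS prednK // ltnW].
by apply: IHr => h hr; apply: r_irr; rewrite inE hr orbT.
Qed.

Lemma separable_monic_factorization p :
  p \is monic -> separable_poly p -> exists r : seq {poly F}, [/\ uniq r,
    forall g, g \in r -> g \is monic /\ irreducible_poly g & p = \prod_(g <- r) g].
Proof.
move=> mon_p sep_p; have [r [r_irr pE]] := monic_irredp_factorization mon_p.
exists r; split=> //; apply: separable_prod_uniq; last by rewrite -pE.
by move=> g /r_irr[_ []].
Qed.

Definition splits p := exists r : seq F, p = \prod_(a <- r) ('X - a%:P).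

Lemma splitsM p q : splits p -> splits q -> splits (p * q).
Proof. by move=> [r1 ->] [r2 ->]; exists (r1 ++ r2); rewrite big_cat. Qed.

Lemma splits_prod (I : eqType) (r : seq I) (Q : I -> {poly F}) :
  (forall i, i \in r -> splits (Q i)) -> splits (\prod_(i <- r) Q i).
Proof.
move=> r_splits; rewrite big_seq; apply: big_ind => //; last exact: splitsM.
by exists [::]; rewrite big_nil.
Qed.

Lemma splitsX p k : splits p -> splits (p ^+ k).
Proof.
move=> sp; elim: k => [|k IHk]; last by rewrite exprS; apply: splitsM.
by exists [::]; rewrite expr0 big_nil.
Qed.

Lemma monic_size2_splits g : g \is monic -> size g = 2%N -> splits g.
Proof.
move=> /monicP mon_g size_g; have g1 : g`_1 = 1 by rewrite -mon_g /lead_coef size_g.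
exists [:: - g`_0]; rewrite big_seq1 polyCN opprK.
rewrite -[g in LHS]coefK size_g poly_def big_ord_recr big_ord1 /=.
by rewrite g1 scale1r expr1 expr0 -alg_polyC addrC.
Qed.

Lemma splits_irredp_size p g : splits p -> irreducible_poly g -> g \is monic ->
  g %| p -> size g = 2%N.
Proof.
move=> [r ->] irr_g mon_g /(irredp_dvdp_prod irr_g)[a _].
by move/(irredp_monic_dvdp_eq irr_g (irredp_XsubC a) mon_g (monicXsubC a))->; rewrite size_XsubC.
Qed.

End IrreducibleFactors.

Section MonicDivisors.
Variable F : fieldType.
Implicit Types p q d g h : {poly F}.

Lemma dvdp_mul_gcdl h p q : h %| p * q -> h %| gcdp h p * q.
Proof.
move=> hpq; have : h %| gcdp (p * q) (h * q) by rewrite dvdp_gcd hpq dvdp_mulr.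
move/dvdp_trans; apply; rewrite -(eqp_dvdl _ (mulp_gcdl _ _ _)).
by rewrite dvdp_mul // dvdp_gcd dvdp_gcdl dvdp_gcdr.
Qed.

Lemma coprimep_dvdp_mul_gcd h p q : coprimep p q -> h %| p * q ->
  h %= gcdp h p * gcdp h q.
Proof.
move=> cop_pq hpq; apply/andP; split; last first.
  rewrite Gauss_dvdp ?dvdp_gcdl //.
  exact: coprimep_dvdr (dvdp_gcdr _ _) (coprimep_dvdl (dvdp_gcdr _ _) cop_pq).
by rewrite mulrC dvdp_mul_gcdl // mulrC dvdp_mul_gcdl.
Qed.

Definition monic_divisors q (s : seq {poly F}) :=
  uniq s /\ forall h, (h \in s) = (h \is monic) && (h %| q).

Lemma monic_divisors_size q s1 s2 :
  monic_divisors q s1 -> monic_divisors q s2 -> size s1 = size s2.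
Proof.
move=> [s1_uniq s1E] [s2_uniq s2E]; apply/perm_size/uniq_perm => // h.
by rewrite s1E s2E.
Qed.

Lemma monic_divisors_filter q s d : monic_divisors q s -> d %| q ->
  monic_divisors d [seq h <- s | h %| d].
Proof.
move=> [s_uniq sE] dq; split=> [|h]; first exact: filter_uniq.
rewrite mem_filter sE andbC -andbA; congr (_ && _).
by apply/andP/idP => [[] | hd] //; rewrite hd (dvdp_trans hd dq).
Qed.

Lemma monic_divisors1 : monic_divisors 1 [:: 1].
Proof.
split=> // h; rewrite inE; apply/eqP/andP => [->|[mon_h]]; first by rewrite monic1 dvdpp.
by rewrite dvdp1 size_poly_eq1 => h1; apply/eqP; rewrite -eqp_monic ?monic1.
Qed.

Lemma monic_divisors_irredp_exp g e : irreducible_poly g -> g \is monic ->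
  monic_divisors (g ^+ e) (mkseq (fun k => g ^+ k) e.+1).
Proof.
move=> irr_g mon_g; split.
  apply: mkseq_uniq => k l /(congr1 (fun p => (size p).-1)) /eqP.
  rewrite !size_exp eqn_mul2l; case/orP => [/eqP|/eqP //].
  by have := irr_g.1; case: (size g) => [|[|]].
move=> h; apply/mapP/andP => [[k] | [mon_h /(monic_dvdp_irredp_exp irr_g mon_g mon_h)]].
  by rewrite mem_iota => /andP[_ le_ke] ->; rewrite monic_exp // dvdp_exp2l.
by case=> k le_ke ->; exists k; rewrite // mem_iota.
Qed.

Lemma monic_divisors_mul p q sp sq : coprimep p q ->
  monic_divisors p sp -> monic_divisors q sq ->
  monic_divisors (p * q) [seq x * y | x <- sp, y <- sq].
Proof.
move=> cop_pq [sp_uniq spE] [sq_uniq sqE]; split.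
  apply: allpairs_uniq => // -[x1 y1] [x2 y2].
  move=> /allpairsP[[x1' y1'] /= [+ + [-> ->]]] /allpairsP[[x2' y2'] /= [+ + [-> ->]]] /=.
  rewrite spE sqE spE sqE => /andP[mon_x1 x1p] /andP[_ y1q] /andP[mon_x2 x2p] /andP[_ y2q] E.
  have cop_xy x y : x %| p -> y %| q -> coprimep x y.
    by move=> xp yq; apply: (coprimep_dvdr xp); apply: (coprimep_dvdl yq).
  have x12 : x1' %| x2' by rewrite -(Gauss_dvdpl _ (cop_xy _ _ x1p y2q)) -E dvdp_mulr.
  have x21 : x2' %| x1' by rewrite -(Gauss_dvdpl _ (cop_xy _ _ x2p y1q)) E dvdp_mulr.
  have ex : x1' = x2' by apply/eqP; rewrite -eqp_monic // /eqp x12 x21.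
  by rewrite -ex in E *; rewrite (mulfI (monic_neq0 mon_x1) E).
move=> h; apply/allpairsP/andP => [[[x y] /= [] ] | [mon_h hpq]].
  by rewrite spE sqE => /andP[mon_x xp] /andP[mon_y yq] ->; rewrite monicMl // mon_y dvdp_mul.
have nz_gcd r : gcdp h r != 0 by rewrite gcdp_eq0 negb_and monic_neq0.
have [x mon_x ex] := monic_eqp_exists (nz_gcd p).
have [y mon_y ey] := monic_eqp_exists (nz_gcd q).
exists (x, y); rewrite /= spE sqE mon_x mon_y (eqp_dvdl _ ex) (eqp_dvdl _ ey) !dvdp_gcdr.
split=> //; apply/eqP; rewrite -eqp_monic ?monicMl //.
apply: eqp_trans (coprimep_dvdp_mul_gcd cop_pq hpq) _.
by apply: eqp_trans (eqp_mulr _ _) (eqp_mull _ _); rewrite eqp_sym.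
Qed.

Definition divisors_prod (I : Type) (r : seq I) (D : I -> seq {poly F}) :=
  foldr (fun i s => [seq x * y | x <- D i, y <- s]) [:: 1] r.

Lemma size_divisors_prod (I : Type) (r : seq I) D :
  size (divisors_prod r D) = (\prod_(i <- r) size (D i))%N.
Proof. by elim: r => [|i r IHr]; rewrite ?big_nil ?big_cons //= size_allpairs IHr. Qed.

Lemma coprimep_prodr (I : eqType) (r : seq I) (Q : I -> {poly F}) p :
  (forall i, i \in r -> coprimep p (Q i)) -> coprimep p (\prod_(i <- r) Q i).
Proof.
move=> cop_r; rewrite big_seq; apply: (big_ind (coprimep p)) => //.
  exact: coprimep1.
by move=> p1 p2; rewrite coprimepMr => -> ->.
Qed.

Lemma monic_divisors_prod (I : eqType) (r : seq I) (Q : I -> {poly F}) D :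
  uniq r -> {in r &, forall i j, i != j -> coprimep (Q i) (Q j)} ->
  {in r, forall i, monic_divisors (Q i) (D i)} ->
  monic_divisors (\prod_(i <- r) Q i) (divisors_prod r D).
Proof.
elim: r => [|i r IHr] /=; first by rewrite big_nil => *; exact: monic_divisors1.
case/andP=> ir r_uniq Q_cop D_div; rewrite big_cons; apply: monic_divisors_mul.
- apply: coprimep_prodr => j jr; apply: Q_cop; rewrite ?inE ?eqxx ?jr ?orbT //.
  by apply: contraNneq ir => ->.
- by apply: D_div; rewrite mem_head.
apply: IHr => // [j k jr kr|j jr]; [apply: Q_cop | apply: D_div]; by rewrite inE ?jr ?kr orbT.
Qed.

End MonicDivisors.

Lemma count_allpairs (S T R : eqType) (f : S -> T -> R) (s : seq S) (t : seq T)
    (P : pred R) (A : pred S) (B : pred T) :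
  {in s & t, forall x y, P (f x y) = A x && B y} ->
  count P [seq f x y | x <- s, y <- t] = (count A s * count B t)%N.
Proof.
elim: s => [|x s IHs] //= PAB; rewrite count_cat mulnDl IHs; last first.
  by move=> x' y xs' yt; apply: PAB; rewrite ?inE ?xs' ?orbT.
congr (_ + _)%N; rewrite count_map (@eq_in_count _ _ (fun y => A x && B y)).
  by case: (A x); rewrite ?mul1n ?mul0n ?count_pred0.
by move=> y yt; apply: PAB; rewrite ?mem_head.
Qed.

Section CountDivisors.
Variable F : fieldType.
Implicit Types p q g h : {poly F}.

Lemma count_divisors_prod (I : eqType) (r : seq I) (Q : I -> {poly F}) D
    (G : I -> pred {poly F}) :
  uniq r -> {in r &, forall i j, i != j -> coprimep (Q i) (Q j)} ->
  {in r, forall i, monic_divisors (Q i) (D i)} ->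
  (forall i u v, u %= v -> G i u = G i v) ->
  count (fun h => all (fun i => G i (gcdp h (Q i))) r) (divisors_prod r D) =
  (\prod_(i <- r) count (G i) (D i))%N.
Proof.
move=> + + + G_eqp; elim: r => [|i r IHr] /=; first by rewrite big_nil.
case/andP=> ir r_uniq Q_cop D_div.
have Q_cop' : {in r &, forall j k, j != k -> coprimep (Q j) (Q k)}.
  by move=> j k jr kr; apply: Q_cop; rewrite inE ?jr ?kr orbT.
have D_div' : {in r, forall j, monic_divisors (Q j) (D j)}.
  by move=> j jr; apply: D_div; rewrite inE jr orbT.
have Qi_cop j : j \in r -> coprimep (Q i) (Q j).
  by move=> jr; apply: Q_cop; rewrite ?inE ?eqxx ?jr ?orbT //; apply: contraNneq ir => ->.
rewrite big_cons -IHr //; apply: count_allpairs => x y.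
rewrite (D_div i (mem_head _ _)).2 (monic_divisors_prod r_uniq Q_cop' D_div').2.
case/andP=> _ xQ /andP[_ yQ]; congr andb.
  apply: G_eqp; apply: eqp_trans (gcdpC _ _) _.
  have cop_y : coprimep (Q i) y by apply: coprimep_dvdl yQ (coprimep_prodr Qi_cop).
  exact: eqp_trans (Gauss_gcdpl _ cop_y) (dvdp_gcd_idr xQ).
apply: eq_in_all => j jr /=; apply: G_eqp.
apply: eqp_trans (gcdpC _ _) (eqp_trans _ (gcdpC _ _)).
by apply: Gauss_gcdpr; apply: coprimep_dvdl xQ _; rewrite coprimep_sym Qi_cop.
Qed.

Definition exp_divisors (r : seq {poly F}) e :=
  divisors_prod r (fun g => mkseq (fun k => g ^+ k) e.+1).

Section ExpDivisors.
Variables (r : seq {poly F}).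
Hypotheses (r_uniq : uniq r)
  (r_irr : forall g, g \in r -> g \is monic /\ irreducible_poly g).

Lemma monic_divisors_exp e : monic_divisors ((\prod_(g <- r) g) ^+ e) (exp_divisors r e).
Proof.
rewrite -prodrXl; apply: monic_divisors_prod => // [g1 g2 g1r g2r g12 | g gr].
  apply/coprimep_expl/coprimep_expr.
  by have [? ?] := r_irr g1r; have [? ?] := r_irr g2r; exact: irredp_monic_coprime.
by have [? ?] := r_irr gr; exact: monic_divisors_irredp_exp.
Qed.

Lemma size_exp_divisors e : size (exp_divisors r e) = (e.+1 ^ size r)%N.
Proof.
rewrite size_divisors_prod (eq_bigr (fun=> e.+1)) => [|g _]; last exact: size_mkseq.
by rewrite big_const_seq count_predT iter_muln_1.
Qed.

Lemma count_exp_divisors_ndvdp e : (0 < e)%N ->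
  count (fun h => ~~ (h %| (\prod_(g <- r) g) ^+ e.-1)) (exp_divisors r e) =
  (e.+1 ^ size r - e ^ size r)%N.
Proof.
move=> e_gt0; have dvd_e : (\prod_(g <- r) g) ^+ e.-1 %| (\prod_(g <- r) g) ^+ e.
  by rewrite dvdp_exp2l // leq_pred.
have := count_predC (fun h => h %| (\prod_(g <- r) g) ^+ e.-1) (exp_divisors r e).
rewrite -size_filter (monic_divisors_size (monic_divisors_filter (monic_divisors_exp e) dvd_e)
  (monic_divisors_exp e.-1)) !size_exp_divisors prednK // => <-.
by rewrite addKn.
Qed.
End ExpDivisors.
End CountDivisors.

Lemma horner_mx_trmx (F : fieldType) n (A : 'M[F]_n.+1) q :
  horner_mx A^T q = (horner_mx A q)^T.
Proof.
elim/poly_ind: q => [|q c IHq]; first by rewrite !rmorph0 trmx0.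
rewrite !rmorphD !rmorphM /= !horner_mx_X !horner_mx_C IHq linearD /= tr_scalar_mx.
by rewrite -!mulmxE -trmx_mul (comm_horner_mx _ (comm_mx_refl A)).
Qed.

Lemma mxminpoly_trmx (F : fieldType) n (A : 'M[F]_n.+1) : mxminpoly A^T = mxminpoly A.
Proof.
apply/eqP; rewrite -eqp_monic ?mxminpoly_monic //; apply/andP; split.
  by apply: mxminpoly_min; rewrite horner_mx_trmx mx_root_minpoly trmx0.
by apply: mxminpoly_min; apply: trmx_inj; rewrite -horner_mx_trmx mx_root_minpoly trmx0.
Qed.

Section InvariantSubspaces.
Variables (F : fieldType) (n : nat) (A : 'M[F]_n.+1).
Implicit Types (c x : 'rV[F]_n.+1) (p q h : {poly F}).

Definition stable_vspace (C : {vspace 'rV[F]_n.+1}) := forall c, c \in C -> c *m A \in C.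

Definition horner_image h : {vspace 'rV[F]_n.+1} := limg (linfun (mulmxr (horner_mx A h))).

Lemma horner_imageP h c : reflect (exists y, c = y *m horner_mx A h) (c \in horner_image h).
Proof.
apply: (iffP memv_imgP) => [[y _ ->]|[y ->]]; first by exists y; rewrite lfunE.
by exists y; rewrite ?memvf // lfunE.
Qed.

Lemma stable_horner_image h : stable_vspace (horner_image h).
Proof.
move=> _ /horner_imageP[y ->]; apply/horner_imageP; exists (y *m A).
by rewrite -!mulmxA (comm_horner_mx _ (comm_mx_refl A)).
Qed.

Lemma stable_vspace_horner C q : stable_vspace C -> forall c, c \in C -> c *m horner_mx A q \in C.
Proof.
move=> C_stable; elim/poly_ind: q => [|q a IHq] c cC; first by rewrite rmorph0 mulmx0 mem0v.
rewrite rmorphD rmorphM /= horner_mx_X horner_mx_C mulmxDr mulmxA mul_mx_scalar.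
by rewrite memvD ?memvZ // C_stable ?IHq.
Qed.

Section CyclicVector.
Variable x : 'rV[F]_n.+1.
Hypothesis x_cyclic : row_free (\matrix_(i < n.+1) (x *m A ^+ i)).

Local Notation p := (mxminpoly A).
Local Notation phi q := (x *m horner_mx A q).

Lemma cyclic_vector_span c : exists q, c = phi q.
Proof.
pose B := \matrix_(i < n.+1) (x *m A ^+ i).
have B_unit : B \in unitmx by rewrite -row_free_unit.
pose u := c *m invmx B; exists (\sum_(i < n.+1) u 0 i *: 'X^i).
rewrite -[c](mulmxKV B_unit) -/u mulmx_sum_row raddf_sum mulmx_sumr /=.
by apply: eq_bigr => i _; rewrite rowK linearZ /= rmorphXn /= horner_mx_X scalemxAr.
Qed.

Lemma mulmx_hornerM q1 q2 : phi (q1 * q2) = phi q1 *m horner_mx A q2.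
Proof. by rewrite rmorphM /= -mulmxE mulmxA. Qed.

Lemma cyclic_horner_eq0 q : (phi q == 0) = (p %| q).
Proof.
rewrite dvd_mxminpoly; apply/eqP/eqP => [phi0|->]; last by rewrite mulmx0.
apply/row_matrixP => i; rewrite row0 rowE.
have [q' ->] := cyclic_vector_span (delta_mx 0 i).
by rewrite -mulmxA mulmxE (comm_horner_mx2 A q' q) -mulmxE mulmxA phi0 mul0mx.
Qed.

Lemma cyclic_mem_horner_image h q : h %| p -> (phi q \in horner_image h) = (h %| q).
Proof.
move=> hp; apply/horner_imageP/idP => [[y E]|/divpK <-]; last first.
  by exists (phi (q %/ h)); rewrite mulmx_hornerM.
have [q' Ey] := cyclic_vector_span y.
move: E; rewrite Ey -mulmx_hornerM => /eqP; rewrite -subr_eq0 -mulmxBr -rmorphB /=.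
by rewrite cyclic_horner_eq0 => /(dvdp_trans hp); rewrite dvdp_subl // dvdp_mull.
Qed.

Lemma horner_image_inj h1 h2 : h1 \is monic -> h2 \is monic -> h1 %| p -> h2 %| p ->
  horner_image h1 = horner_image h2 -> h1 = h2.
Proof.
move=> mon_h1 mon_h2 h1p h2p E; apply/eqP; rewrite -eqp_monic //.
have := cyclic_mem_horner_image h1 h1p; rewrite E cyclic_mem_horner_image // dvdpp => h21.
have := cyclic_mem_horner_image h2 h2p; rewrite -E cyclic_mem_horner_image // dvdpp => h12.
by rewrite /eqp h12 h21.
Qed.

Lemma stable_vspace_horner_image C : stable_vspace C ->
  exists2 h, (h \is monic) && (h %| p) & C = horner_image h.
Proof.
(* [I] is an ideal of F[x], generated by its monic element h of least degree. *)
move=> C_stable; pose I q := phi q \in C.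
have I_sub q1 q2 : I q1 -> I q2 -> I (q1 - q2).
  by rewrite /I rmorphB mulmxBr; apply: memvB.
have I_mulr q1 q2 : I q1 -> I (q1 * q2) by rewrite /I mulmx_hornerM; apply: stable_vspace_horner.
have I_monic : exists k, `[< exists q, [/\ I q, q \is monic & size q = k] >].
  exists (size p); apply/asboolP; exists p; split=> //; last exact: mxminpoly_monic.
  by rewrite /I mx_root_minpoly mulmx0 mem0v.
have [k /asboolP[h [Ih mon_h <-]] k_min] := ex_minnP I_monic.
have I_dvd q : I q -> h %| q.
  move=> Iq; apply/modp_eq0P/eqP/negPn/negP => r_neq0.
  have Ir : I (q %% h).
    have -> : q %% h = q - q %/ h * h by rewrite {2}(divp_eq q h) addrC addKr.
    by apply: I_sub => //; rewrite mulrC I_mulr.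
  pose r := (lead_coef (q %% h))^-1 *: (q %% h).
  have : (size h <= size r)%N.
    apply: k_min; apply/asboolP; exists r; split=> //.
      by rewrite /r -mul_polyC mulrC I_mulr.
    by rewrite monicE lead_coefZ mulVf ?lead_coef_eq0.
  by rewrite size_scale ?invr_eq0 ?lead_coef_eq0 // leqNgt ltn_modp monic_neq0.
have hp : h %| p by apply: I_dvd; rewrite /I mx_root_minpoly mulmx0 mem0v.
exists h; rewrite ?mon_h //; apply/vspaceP => c; have [q ->] := cyclic_vector_span c.
rewrite cyclic_mem_horner_image //; apply/idP/idP; first exact: I_dvd.
by move/divpK <-; rewrite mulrC; exact: I_mulr.
Qed.
End CyclicVector.
End InvariantSubspaces.

Section PrimaryComponents.
Variables (K L : fieldType) (iota : {rmorphism K -> L}) (I : finType)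
  (f : I -> {poly K}) (m : I -> nat).
Hypotheses (f_inj : injective f) (f_monic : forall i, f i \is monic)
  (f_irr : forall i, irreducible_poly (f i)) (m_gt0 : forall i, (0 < m i)%N).

Local Notation fL i := (map_poly iota (f i)).
Local Notation fK := (\prod_i f i ^+ m i).
Local Notation cofactor i := (\prod_(j | j != i) f j ^+ m j).

Lemma coprimep_cofactor i : coprimep (f i ^+ m i) (cofactor i).
Proof.
rewrite -big_filter; apply: coprimep_prodr => j; rewrite mem_filter => /andP[ji _].
apply/coprimep_expl/coprimep_expr/irredp_monic_coprime => //.
by apply: contra ji => /eqP/f_inj->.
Qed.

Lemma prod_primary_dvdp d : (forall i, f i ^+ m i %| d) -> fK %| d.
Proof.
move=> f_dvd; elim: (index_enum I) (index_enum_uniq I) => [|i r IHr].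
  by rewrite big_nil dvd1p.
case/andP=> ir r_uniq; rewrite big_cons Gauss_dvdp ?f_dvd ?IHr //.
apply: coprimep_prodr => j jr; apply/coprimep_expl/coprimep_expr/irredp_monic_coprime => //.
by apply: contraNneq ir => /f_inj->.
Qed.

(* With [fK] the minimal polynomial of M, the polynomials [a] stand for the nonzero
   K-rational codewords of the code generated by [h]. *)
Lemma dvdp_map_nondvdp_prod (h : {poly L}) : h %| \prod_i fL i ^+ m i ->
  (exists a : {poly K}, ~~ (fK %| a) /\ h %| map_poly iota a) <->
  (exists i, gcdp h (fL i ^+ m i) %| fL i ^+ (m i).-1).
Proof.
have fKE i : fK = f i ^+ m i * cofactor i by rewrite (bigD1 i).
have mapE k i : map_poly iota (f i ^+ k * cofactor i) = fL i ^+ k * map_poly iota (cofactor i).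
  by rewrite rmorphM rmorphXn.
have map_fK : map_poly iota fK = \prod_i fL i ^+ m i.
  by rewrite rmorph_prod; apply: eq_bigr => i _; rewrite rmorphXn.
have cop_map i : coprimep (gcdp h (fL i ^+ m i)) (map_poly iota (cofactor i)).
  by rewrite (coprimep_dvdr (dvdp_gcdr _ _)) // -rmorphXn coprimep_map coprimep_cofactor.
have R_neq0 i : cofactor i != 0.
  by rewrite prodf_seq_neq0; apply/allP => j _; apply/implyP => _; rewrite expf_neq0 ?monic_neq0.
move=> h_dvd; split=> [[a [fK_a h_a]] | [i hi]].
  pose d := gcdp a fK.
  have /existsNP[i not_fi] : ~ forall i, f i ^+ m i %| d.
    by move/prod_primary_dvdp; rewrite dvdp_gcd dvdpp andbT (negPf fK_a).
  have d_dvd : d %| f i ^+ (m i).-1 * cofactor i.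
    have : d %| gcdp d (f i ^+ m i) * cofactor i by rewrite dvdp_mul_gcdl // -fKE dvdp_gcdr.
    move/dvdp_trans; apply; rewrite dvdp_mul2r //.
    apply: (dvdp_irredp_expS (f_irr i)); rewrite prednK ?dvdp_gcdr //.
    by apply: contra (introN idP not_fi) => /dvdp_trans; apply; rewrite dvdp_gcdl.
  exists i; rewrite -(Gauss_dvdpl _ (cop_map i)) -mapE.
  apply: dvdp_trans (dvdp_gcdl _ _) (dvdp_trans (_ : h %| map_poly iota d) _).
    by rewrite /d gcdp_map dvdp_gcd h_a map_fK.
  by rewrite dvdp_map.
exists (f i ^+ (m i).-1 * cofactor i); split.
  by rewrite (fKE i) dvdp_mul2r ?dvdp_Pexp2l ?(f_irr i).1 -?ltnNge ?prednK.
have : h %| fL i ^+ m i * map_poly iota (cofactor i) by rewrite -mapE -(fKE i) map_fK.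
by move/dvdp_mul_gcdl/dvdp_trans; apply; rewrite mapE dvdp_mul2r ?map_poly_eq0.
Qed.
End PrimaryComponents.

Section RankWeight.
Variables (K : fieldType) (L : fieldExtType K) (d : nat).
Implicit Types (c : 'rV[L]_d) (u : 'rV[K]_d).

Local Notation coords c := (<<[seq c ord0 i | i <- enum 'I_d]>>%VS : {vspace L}).

Lemma coord_in_span c j : c ord0 j \in coords c.
Proof. by apply: memv_span; apply: map_f; rewrite mem_enum. Qed.

Lemma wtR_gt0 c : c != 0 -> (0 < wtR c)%N.
Proof.
case/matrix0Pn=> i [j]; rewrite ord1 lt0n dimv_eq0 => cj; apply: contra cj => /eqP c0.
by rewrite -memv0 -c0 coord_in_span.
Qed.

Lemma wtR_eq1 c : c != 0 -> wtR c = 1%N ->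
  exists lam (u : 'rV[K]_d), lam != 0 /\ c = lam *: map_mx (in_alg L) u.
Proof.
case/matrix0Pn=> i [j]; rewrite ord1 => cj wc1.
have coordsE : coords c = <[c ord0 j]>%VS.
  apply/eqP; rewrite eq_sym eqEdim -memvE coord_in_span /= dim_vline cj.
  by move: wc1; rewrite /wtR => ->.
have /all_sig[k kP] i' : {k : K | c ord0 i' = k *: c ord0 j}.
  by apply/sig_eqW/vlineP; rewrite -coordsE coord_in_span.
exists (c ord0 j), (\row_i' k i'); split=> //; apply/rowP => i'.
by rewrite !mxE ord1 kP in_algE -scalerAr mulr1.
Qed.

Lemma wtR_map_mx u : u != 0 -> wtR (map_mx (in_alg L) u) = 1%N.
Proof.
move=> u_neq0; apply/eqP; rewrite eqn_leq wtR_gt0 ?map_mx_eq0 // andbT.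
have /dimvS : (coords (map_mx (in_alg L) u) <= <[1 : L]>)%VS.
  by apply/span_subvP => _ /mapP[i _ ->]; rewrite mxE in_algE memvZ ?memv_line.
by move/leq_trans; apply; rewrite dim_vline oner_neq0.
Qed.

Lemma M1_eq1 (C : {vspace 'rV[L]_d}) :
  M1 C = 1%N <-> exists2 u : 'rV[K]_d, u != 0 & map_mx (in_alg L) u \in C.
Proof.
have rational_weight1 u : u != 0 -> map_mx (in_alg L) u \in C -> has_weight C 1.
  move=> u_neq0 uC; apply/asboolP; exists (map_mx (in_alg L) u) => //.
  by rewrite map_mx_eq0 u_neq0 wtR_map_mx.
rewrite /M1; case: pselect => [C_wt | no_wt]; last first.
  by split=> // -[u u_neq0 uC]; case: no_wt; exists 1%N; apply: rational_weight1 uC.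
case: ex_minnP => k /asboolP[c cC /andP[c_neq0 /eqP wc]] k_min; split=> [k1 | [u u_neq0 uC]].
  have [lam [u [lam_neq0 cE]]] := wtR_eq1 c_neq0 (etrans wc k1).
  exists u; first by apply: contra c_neq0 => /eqP u0; rewrite cE u0 map_mx0 scaler0.
  suff -> : map_mx (in_alg L) u = lam^-1 *: c by rewrite memvZ.
  by rewrite cE scalerA mulVf ?scale1r.
by apply/eqP; rewrite eqn_leq -wc wtR_gt0 // wc andbT k_min // (rational_weight1 u).
Qed.

Lemma M1_vspace0 : M1 (0%VS : {vspace 'rV[L]_d}) != 1%N.
Proof. by apply/eqP => /M1_eq1[u u_neq0]; rewrite memv0 map_mx_eq0 (negPf u_neq0). Qed.

End RankWeight.

(* The proportion of the exponent vectors in [0, m]^d having a coordinate equal to m. *)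
Definition full_ratio (m d : nat) : rat := 1 - (m%:R / m.+1%:R) ^+ d.

Lemma full_ratioE m d :
  ((m.+1 ^ d - m ^ d)%N%:R / (m.+1 ^ d)%N%:R : rat) = full_ratio m d.
Proof.
have m1_neq0 : (m.+1%:R : rat) ^+ d != 0 by rewrite expf_neq0 ?pnatr_eq0.
have le_exp : (m ^ d <= m.+1 ^ d)%N by case: d {m1_neq0} => // d; rewrite leq_exp2r.
rewrite natrB // !natrX /full_ratio expr_div_n.
by field.
Qed.

Lemma full_ratio1 m : full_ratio m 1 = (m.+1%:R)^-1.
Proof.
have m1_neq0 : (m.+1%:R : rat) != 0 by rewrite pnatr_eq0.
by rewrite /full_ratio expr1 -[m.+1]addn1 natrD in m1_neq0 *; field.
Qed.

Section FullRatio.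
Variable m : nat.
Hypothesis m_gt0 : (0 < m)%N.

Let q_gt0 : 0 < (m%:R / m.+1%:R : rat). Proof. by rewrite divr_gt0 ?ltr0n. Qed.
Let q_lt1 : (m%:R / m.+1%:R : rat) < 1. Proof. by rewrite ltr_pdivrMr ?ltr0n // mul1r ltr_nat. Qed.

Lemma full_ratio_gt0 d : (0 < d)%N -> 0 < full_ratio m d.
Proof. by move=> d_gt0; rewrite subr_gt0 exprn_ilt1 ?ltW // -lt0n. Qed.

Lemma full_ratio_le d e : (full_ratio m d <= full_ratio m e) = (d <= e)%N.
Proof. by rewrite lerD2l lerN2 ler_iXn2l. Qed.

Lemma full_ratio_inj : injective (full_ratio m).
Proof. by move=> d e /eqP; rewrite eq_le !full_ratio_le -eqn_leq => /eqP. Qed.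

Lemma subn_exp_eq1 d : (0 < d)%N -> (m.+1 ^ d - m ^ d)%N = 1%N -> d = 1%N.
Proof.
case: d => // -[//|d] _; have le_exp : (m ^ d.+1 <= m.+1 ^ d.+1)%N by rewrite leq_exp2r.
have : (2 <= m.+1 ^ d.+1)%N by rewrite (leq_trans _ (leq_pexp2l _ (ltn0Sn d))) ?ltnS.
rewrite !(expnS _ d.+1) mulSn; move: (m.+1 ^ d.+1)%N (m ^ d.+1)%N le_exp => a b le_ba.
by have := leq_mul (leqnn m) le_ba; lia.
Qed.

End FullRatio.

Lemma prod_ler_eq (I : finType) (a b : I -> rat) :
  (forall i, 0 < a i) -> (forall i, a i <= b i) ->
  \prod_i a i = \prod_i b i -> forall i, a i = b i.
Proof.
move=> a_gt0 le_ab E i; apply/eqP; rewrite eq_le le_ab /=.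
apply: contraT; rewrite -ltNge => lt_ba.
have b_gt0 j : 0 < b j by apply: lt_le_trans (le_ab j).
have lt_prod : a i * \prod_(j | j != i) a j < b i * \prod_(j | j != i) b j.
  apply: le_lt_trans (_ : _ <= a i * \prod_(j | j != i) b j) _.
    by rewrite ler_pM2l //; apply: ler_prod => j _; rewrite (ltW (a_gt0 j)) le_ab.
  by rewrite ltr_pM2r // prodr_gt0.
by move: E lt_prod; rewrite (bigD1 i) //= [RHS](bigD1 i) //= => ->; rewrite ltxx.
Qed.

Lemma prod_full_ratio_eq (I : finType) (m d e : I -> nat) :
  (forall i, 0 < m i)%N -> (forall i, 0 < d i <= e i)%N ->
  \prod_i full_ratio (m i) (d i) = \prod_i full_ratio (m i) (e i) <-> forall i, d i = e i.
Proof.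
move=> m_gt0 de; split=> [E i | dE]; last by apply: eq_bigr => i _; rewrite dE.
apply: (full_ratio_inj (m_gt0 i)); apply: prod_ler_eq E i => j.
  by apply: full_ratio_gt0; case/andP: (de j).
by rewrite full_ratio_le //; case/andP: (de j).
Qed.

Lemma count_eq1_uniq (T : eqType) (s : seq T) (P : pred T) x :
  uniq s -> x \in s -> P x -> count P s = 1%N <-> {in s, forall y, P y -> y = x}.
Proof.
move=> s_uniq xs Px; split=> [cnt1 y ys Py | P_x].
  apply/eqP; apply: contraT => yx; suff : (size [:: y; x] <= count P s)%N by rewrite cnt1.
  rewrite -size_filter uniq_leq_size //= ?inE ?yx // => z; rewrite !inE mem_filter.
  by case/orP=> /eqP->; rewrite ?Py ?Px.
rewrite (@eq_in_count _ _ (pred1 x)) ?count_uniq_mem ?xs // => y ys /=.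
by apply/idP/eqP => [/(P_x y ys)|->].
Qed.

Section CyclicCodes.
Variables (K : fieldType) (L : fieldExtType K) (n : nat) (M : 'M[K]_n.+1).
Variables (I : finType) (f : I -> {poly K}) (m : I -> nat) (S : I -> seq {poly L}).
Variable v : 'rV[K]_n.+1.
Hypotheses (v_cyclic : row_free (\matrix_(i < n.+1) (v *m M^T ^+ i)))
  (f_inj : injective f) (f_monic : forall i, f i \is monic)
  (f_irr : forall i, irreducible_poly (f i)) (m_gt0 : forall i, (0 < m i)%N)
  (minpolyE : mxminpoly M = \prod_i f i ^+ m i)
  (S_uniq : forall i, uniq (S i))
  (S_irr : forall i g, g \in S i -> g \is monic /\ irreducible_poly g)
  (fLE : forall i, map_poly (in_alg L) (f i) = \prod_(g <- S i) g).

Local Notation fL i := (map_poly (in_alg L) (f i)).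
Local Notation Q i := (fL i ^+ m i).
Local Notation ML := (map_mx (in_alg L) M)^T.
Local Notation mapL := (map_mx (in_alg L)).

Definition delta i := size (S i).

Definition code_divisors := divisors_prod (index_enum I) (fun i => exp_divisors (S i) (m i)).

Definition codes := map (horner_image ML) code_divisors.

Lemma mxminpoly_ML : mxminpoly ML = \prod_i Q i.
Proof.
rewrite mxminpoly_trmx mxminpoly_map minpolyE rmorph_prod.
by apply: eq_bigr => i _; rewrite rmorphXn.
Qed.

Lemma coprimep_primary i j : i != j -> coprimep (Q i) (Q j).
Proof.
move=> ij; apply/coprimep_expl/coprimep_expr; rewrite coprimep_map irredp_monic_coprime //.
by apply: contra ij => /eqP/f_inj->.
Qed.

Lemma monic_divisors_primary i : monic_divisors (Q i) (exp_divisors (S i) (m i)).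
Proof. by rewrite fLE; exact (monic_divisors_exp (S_uniq i) (@S_irr i) (m i)). Qed.

Lemma monic_divisors_code_divisors : monic_divisors (mxminpoly ML) code_divisors.
Proof.
rewrite mxminpoly_ML; apply: monic_divisors_prod => [|i j _ _|i _].
- exact: index_enum_uniq.
- exact: coprimep_primary.
exact: monic_divisors_primary.
Qed.

Lemma map_mulmx_horner a :
  mapL (v *m horner_mx M^T a) = mapL v *m horner_mx ML (map_poly (in_alg L) a).
Proof. by rewrite map_mxM map_horner_mx map_trmx. Qed.

Lemma cyclic_ML : row_free (\matrix_(i < n.+1) (mapL v *m ML ^+ i)).
Proof.
have -> : \matrix_(i < n.+1) (mapL v *m ML ^+ i) = mapL (\matrix_(i < n.+1) (v *m M^T ^+ i)).
  by apply/row_matrixP => i; rewrite -map_row !rowK map_mxM rmorphXn /= map_trmx.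
by rewrite row_free_unit map_unitmx -row_free_unit.
Qed.

Lemma mem_codes C : C \in codes <-> Mcyclic_code M C.
Proof.
split=> [/mapP[h _ ->] | /(stable_vspace_horner_image cyclic_ML)[h hp ->]].
  exact: stable_horner_image.
by apply: map_f; rewrite monic_divisors_code_divisors.2.
Qed.

Lemma uniq_codes : uniq codes.
Proof.
have [div_uniq divE] := monic_divisors_code_divisors.
rewrite map_inj_in_uniq // => h1 h2; rewrite !divE => /andP[mon1 dvd1] /andP[mon2 dvd2].
exact: (horner_image_inj cyclic_ML mon1 mon2 dvd1 dvd2).
Qed.

Lemma size_codes : size codes = (\prod_i (m i).+1 ^ delta i)%N.
Proof.
rewrite size_map size_divisors_prod; apply: eq_bigr => i _.
exact: size_exp_divisors.
Qed.

Lemma rational_vector_horner_image h : h %| mxminpoly ML ->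
  (exists2 u : 'rV[K]_n.+1, u != 0 & mapL u \in horner_image ML h) <->
  (exists a : {poly K}, ~~ (\prod_i f i ^+ m i %| a) /\ h %| map_poly (in_alg L) a).
Proof.
move=> h_dvd; have nz_mulmx a : (v *m horner_mx M^T a != 0) = ~~ (\prod_i f i ^+ m i %| a).
  by rewrite (cyclic_horner_eq0 v_cyclic) mxminpoly_trmx minpolyE.
have mem_image a :
    (mapL (v *m horner_mx M^T a) \in horner_image ML h) = (h %| map_poly (in_alg L) a).
  by rewrite map_mulmx_horner (cyclic_mem_horner_image cyclic_ML).
split=> [[u] | [a [fK_a h_a]]].
  by have [a ->] := cyclic_vector_span v_cyclic u; rewrite nz_mulmx mem_image; exists a.
by exists (v *m horner_mx M^T a); rewrite ?nz_mulmx ?mem_image.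
Qed.

Lemma M1_horner_image h : h \in code_divisors ->
  (M1 (horner_image ML h) != 1%N) =
  all (fun i => ~~ (gcdp h (Q i) %| fL i ^+ (m i).-1)) (index_enum I).
Proof.
rewrite monic_divisors_code_divisors.2 => /andP[_ h_dvd].
have h_dvdQ : h %| \prod_i Q i by rewrite -mxminpoly_ML.
rewrite all_predC; congr negb; apply/eqP/hasP => [|[i _ hi]].
  move/M1_eq1/(rational_vector_horner_image h_dvd).
  by case/(dvdp_map_nondvdp_prod f_inj f_monic f_irr m_gt0 h_dvdQ) => i hi; exists i.
apply/M1_eq1/(rational_vector_horner_image h_dvd).
by apply/(dvdp_map_nondvdp_prod f_inj f_monic f_irr m_gt0 h_dvdQ); exists i.
Qed.

Definition good_code (C : {vspace 'rV[L]_n.+1}) := (C == 0%VS) || (M1 C != 1%N).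

Lemma count_good_codes :
  count good_code codes = (\prod_i ((m i).+1 ^ delta i - m i ^ delta i))%N.
Proof.
have goodE C : good_code C = (M1 C != 1%N).
  by apply: orb_idl => /eqP->; exact: M1_vspace0.
rewrite (eq_count goodE) count_map (eq_in_count M1_horner_image).
pose G i (u : {poly L}) := ~~ (u %| fL i ^+ (m i).-1).
transitivity (\prod_i count (G i) (exp_divisors (S i) (m i)))%N.
  apply: (count_divisors_prod (Q := fun i => Q i)) => [|i j _ _|i _|i u w uw].
  - exact: index_enum_uniq.
  - exact: coprimep_primary.
  - exact: monic_divisors_primary.
  by rewrite /G (eqp_dvdl _ uw).
apply: eq_bigr => i _; rewrite /G fLE.
exact (count_exp_divisors_ndvdp (S_uniq i) (@S_irr i) (m_gt0 i)).
Qed.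

Lemma good_code_ratio :
  ((count good_code codes)%:R / (size codes)%:R : rat) = \prod_i full_ratio (m i) (delta i).
Proof.
rewrite count_good_codes size_codes !natr_prod -prodf_div.
by apply: eq_bigr => i _; exact: full_ratioE.
Qed.

Lemma is_delta_fL i : is_delta (fL i) (delta i).
Proof. by exists (S i); split=> // q; rewrite fLE; exact: mem_irredp_factors (@S_irr i). Qed.

Lemma delta_gt0 i : (0 < delta i)%N.
Proof.
rewrite lt0n size_eq0; apply: contraTneq (f_irr i).1 => S0.
by rewrite -(size_map_poly (in_alg L)) fLE S0 big_nil size_poly1.
Qed.

Lemma delta_le_deg i :
  (delta i <= (size (f i)).-1 ?= iff all (fun g : {poly L} => size g == 2%N) (S i))%N.
Proof. by rewrite -(size_map_poly (in_alg L)) fLE; apply: size_prod_irredp => g /S_irr[]. Qed.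

Lemma irreducible_fL_delta : (forall i, irreducible_poly (fL i)) <-> (forall i, delta i = 1%N).
Proof.
split=> [irr_fL | delta1] i; have irrE := irredp_prod_irredp (S_uniq i) (@S_irr i).
  by apply/irrE; rewrite -fLE.
by rewrite fLE; apply/irrE/delta1.
Qed.

Lemma splits_minpoly_delta :
  splits (map_poly (in_alg L) (mxminpoly M)) <-> (forall i, delta i = (size (f i)).-1).
Proof.
have minpolyLE : map_poly (in_alg L) (mxminpoly M) = \prod_i Q i.
  by rewrite minpolyE rmorph_prod; apply: eq_bigr => i _; rewrite rmorphXn.
split=> [spl i | delta_deg].
  apply/eqP; rewrite (delta_le_deg i).2; apply/allP => g gS; have [mon_g irr_g] := S_irr gS.
  apply/eqP/(splits_irredp_size spl irr_g mon_g); rewrite minpolyLE (bigD1 i) //=.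
  apply: dvdp_mulr; rewrite -(prednK (m_gt0 i)) exprS fLE dvdp_mulr //.
  by rewrite (big_rem g gS) dvdp_mulr.
rewrite minpolyLE; apply: splits_prod => i _; rewrite fLE; apply/splitsX/splits_prod => g gS.
have [mon_g irr_g] := S_irr gS; apply: monic_size2_splits => //; apply/eqP.
by move/eqP: (delta_deg i); rewrite (delta_le_deg i).2 => /allP; apply.
Qed.

Lemma weight1_codes_delta :
  (forall C : {vspace 'rV[L]_n.+1}, Mcyclic_code M C -> C != 0%VS -> M1 C = 1%N) <->
  (forall i, delta i = 1%N).
Proof.
have code0 : (0%VS : {vspace 'rV[L]_n.+1}) \in codes.
  by apply/mem_codes => c; rewrite memv0 => /eqP->; rewrite mul0mx mem0v.
have count1 := count_eq1_uniq uniq_codes code0 (_ : good_code 0%VS).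
have count_good1 : count good_code codes = 1%N <-> forall i, delta i = 1%N.
  rewrite count_good_codes; split=> [/eqP | delta1].
    rewrite prod_nat_seq_eq1 => /allP delta1 i.
    apply: (subn_exp_eq1 (m_gt0 i) (delta_gt0 i)); apply/eqP.
    exact: delta1 i (mem_index_enum i).
  by rewrite big1 // => i _; rewrite delta1 !expn1 subSnn.
apply: iff_trans count_good1; rewrite count1 /good_code ?eqxx //.
split=> [weight1 C /mem_codes C_code | only0 C C_code C_neq0].
  case/orP=> [/eqP // | M1C]; apply/eqP; apply: contraNT M1C => C_neq0.
  by apply/eqP; exact: weight1.
apply/eqP; apply: contraNT C_neq0 => M1C; apply/eqP/(only0 C); first exact/mem_codes.
by rewrite M1C orbT.
Qed.

Lemma cyclic_codes_proportion :
  let P : rat := (count good_code codes)%:R / (size codes)%:R in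
  let lowP : rat := \prod_i ((m i).+1%:R)^-1 in
  let upP : rat := \prod_i full_ratio (m i) (size (f i)).-1 in
  [/\ [/\ forall i, is_delta (fL i) (delta i), uniq codes &
          forall C : {vspace 'rV[L]_n.+1}, C \in codes <-> Mcyclic_code M C],
      P = \prod_i full_ratio (m i) (delta i),
      lowP <= P /\ P <= upP,
      (P = lowP <-> forall i, irreducible_poly (fL i)) /\
      (P = lowP <-> forall C : {vspace 'rV[L]_n.+1},
                      Mcyclic_code M C -> C != 0%VS -> M1 C = 1%N)
    & P = upP <-> splits (map_poly (in_alg L) (mxminpoly M))].
Proof.
move=> P lowP upP; have PE : P = \prod_i full_ratio (m i) (delta i) := good_code_ratio.
have lowPE : lowP = \prod_i full_ratio (m i) 1 by apply: eq_bigr => i _; rewrite full_ratio1.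
have low_bound i : (0 < 1 <= delta i)%N by rewrite delta_gt0.
have up_bound i : (0 < delta i <= (size (f i)).-1)%N by rewrite delta_gt0 (delta_le_deg i).
have lowP_delta : P = lowP <-> forall i, delta i = 1%N.
  rewrite PE lowPE; split=> [/esym/(prod_full_ratio_eq m_gt0 low_bound) E i | E].
    by rewrite -E.
  by apply: eq_bigr => i _; rewrite E.
have upP_delta : P = upP <-> forall i, delta i = (size (f i)).-1.
  by rewrite PE; apply: prod_full_ratio_eq m_gt0 up_bound.
split.
- by split=> [i||C]; [exact: is_delta_fL | exact: uniq_codes | exact: mem_codes].
- exact: PE.
- rewrite PE lowPE; split; apply: ler_prod => i _.
    by rewrite ltW ?full_ratio_gt0 //= full_ratio_le //; case/andP: (low_bound i).
  by rewrite ltW ?full_ratio_gt0 ?delta_gt0 //= full_ratio_le // (delta_le_deg i).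
- split; apply: iff_trans lowP_delta _; apply: iff_sym.
    exact: irreducible_fL_delta.
  exact: weight1_codes_delta.
by apply: iff_trans upP_delta (iff_sym splits_minpoly_delta).
Qed.

End CyclicCodes.

Theorem theorem4 (K : fieldType) (L : fieldExtType K) (n : nat)
  (M : 'M[K]_n.+1) (s : nat) (f : 'I_s -> {poly K}) (m : 'I_s -> nat) :
  (n.+1 <= \dim {:L})%N ->
  cyclic_mx M ->
  injective f ->
  (forall i, f i \is monic) ->
  (forall i, irreducible_poly (f i)) ->
  (forall i, separable_poly (f i)) ->
  (forall i, 1 <= m i)%N ->
  mxminpoly M = \prod_(i < s) f i ^+ m i ->
  let fL i := map_poly (in_alg L) (f i) in
  exists (delta : 'I_s -> nat) (codes : seq {vspace 'rV[L]_n.+1}),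
    let P : rat := (count (fun C => (C == 0%VS) || (M1 C != 1%N)) codes)%:R
                   / (size codes)%:R in
    let lowP : rat := \prod_(i < s) ((m i).+1%:R)^-1 in
    let upP : rat := \prod_(i < s)
        (1 - ((m i)%:R / (m i).+1%:R) ^+ (size (f i)).-1) in
    [/\ [/\ (forall i, is_delta (fL i) (delta i)),
          uniq codes &
          (forall C : {vspace 'rV[L]_n.+1}, C \in codes <-> Mcyclic_code M C)],
        P = \prod_(i < s) (1 - ((m i)%:R / (m i).+1%:R) ^+ delta i),
        lowP <= P /\ P <= upP,
        (P = lowP <-> (forall i, irreducible_poly (fL i))) /\
        (P = lowP <-> (forall C : {vspace 'rV[L]_n.+1}, Mcyclic_code M C -> C != 0%VS -> M1 C = 1%N))
      & (P = upP <-> exists r : seq L,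
           map_poly (in_alg L) (mxminpoly M) = \prod_(a <- r) ('X - a%:P))].
Proof.
move=> _ [v v_cyclic] f_inj f_monic f_irr f_sep m_gt0 minpolyE fL.
have /choice[S S_spec] i : exists r : seq {poly L}, [/\ uniq r,
    forall g, g \in r -> g \is monic /\ irreducible_poly g & fL i = \prod_(g <- r) g].
  by apply: separable_monic_factorization; rewrite ?map_monic ?separable_map.
have S_uniq i : uniq (S i) by case: (S_spec i).
have S_irr i : forall g, g \in S i -> g \is monic /\ irreducible_poly g by case: (S_spec i).
have fLE i : fL i = \prod_(g <- S i) g by case: (S_spec i).
exists (delta S), (codes M m S).
exact: cyclic_codes_proportion v_cyclic f_inj f_monic f_irr m_gt0 minpolyE S_uniq S_irr fLE.
Qed.
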